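(* A $\lambda$-term $M$ is in $\mathsf v$-normal form if and only if $M$ is a $G$-term generated by the following grammar (with $k\ge0$): $G::=H\mid R$; $H::=x\mid\lambda x.G\mid xHG_1\cdots G_k$; $R::=(\lambda x.G)(yHG_1\cdots G_k)$.
   Context: $\lambda$-terms and values are $M,N::=V\mid MN$, $V::=x\mid\lambda x.M$ (application associates to the left), up to $\alpha$-conversion. Rules: $(\beta_v)$ $(\lambda x.M)V\to M\{x:=V\}$ if $V$ is a value; $(\sigma_1)$ $(\lambda x.M)NP\to(\lambda x.MP)N$ if $x\notin\mathrm{FV}(P)$; $(\sigma_3)$ $V((\lambda x.M)N)\to(\lambda x.VM)N$ if $V$ is a value and $x\notin\mathrm{FV}(V)$. $\to_{\mathsf v}$ is the contextual closure of their union; $M$ is in $\mathsf v$-normal form if there is no $N$ with $M\to_{\mathsf v}N$. *)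

(* Lambda-terms up to alpha-conversion, via de Bruijn indices. *)
From Stdlib Require Import Arith.

Inductive term : Type :=
| Var : nat -> term
| Lam : term -> term
| App : term -> term -> term.

Definition is_value (t : term) : Prop :=
  match t with Var _ | Lam _ => True | App _ _ => False end.

Fixpoint lift (k c : nat) (t : term) : term :=
  match t with
  | Var n => if n <? c then Var n else Var (n + k)
  | Lam u => Lam (lift k (S c) u)
  | App u v => App (lift k c u) (lift k c v)
  end.

Fixpoint subst (j : nat) (s : term) (t : term) : term :=
  match t with
  | Var n => if n =? j then lift j 0 s
             else if j <? n then Var (pred n) else Var n
  | Lam u => Lam (subst (S j) s u)
  | App u v => App (subst j s u) (subst j s v)
  end.

(* One step of ->_v : contextual closure of beta_v, sigma_1, sigma_3.
   The freshness side conditions of sigma_1 / sigma_3 are realized by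
   lifting P (resp. V) under the new binder. *)
Inductive step : term -> term -> Prop :=
| step_betav : forall M V, is_value V ->
    step (App (Lam M) V) (subst 0 V M)
| step_sigma1 : forall M N P,
    step (App (App (Lam M) N) P) (App (Lam (App M (lift 1 0 P))) N)
| step_sigma3 : forall V M N, is_value V ->
    step (App V (App (Lam M) N)) (App (Lam (App (lift 1 0 V) M)) N)
| step_lam : forall M M', step M M' -> step (Lam M) (Lam M')
| step_appl : forall M M' N, step M M' -> step (App M N) (App M' N)
| step_appr : forall M N N', step N N' -> step (App M N) (App M N').

Definition v_normal (M : term) : Prop := ~ exists N, step M N.

(* Grammar: G ::= H | R ; H ::= x | \x.G | x H G_1 ... G_k ;
   R ::= (\x.G)(y H G_1 ... G_k), k >= 0.
   is_sp t : t is of the form  x H G_1 ... G_k  (k >= 0). *)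
Inductive is_G : term -> Prop :=
| G_H : forall t, is_H t -> is_G t
| G_R : forall t, is_R t -> is_G t
with is_H : term -> Prop :=
| H_var : forall n, is_H (Var n)
| H_lam : forall g, is_G g -> is_H (Lam g)
| H_sp : forall t, is_sp t -> is_H t
with is_R : term -> Prop :=
| R_intro : forall g t, is_G g -> is_sp t -> is_R (App (Lam g) t)
with is_sp : term -> Prop :=
| sp_base : forall n h, is_H h -> is_sp (App (Var n) h)
| sp_app : forall t g, is_sp t -> is_G g -> is_sp (App t g).

(* A term is v-normal iff its immediate subterms are v-normal and it is not
   itself a redex of beta_v, sigma_1 or sigma_3.  The grammar tracks exactly the
   shape information this needs: H-terms are the normal forms that are not of
   the form (\x.M)N, the spines x H G_1 ... G_k are the H-terms that are
   applications, and an R-term is the only way an abstraction may be applied in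
   normal form, namely to a spine, which is neither a value nor of the form
   (\x.M)N. *)

Scheme is_G_ind' := Induction for is_G Sort Prop
with is_H_ind' := Induction for is_H Sort Prop
with is_R_ind' := Induction for is_R Sort Prop
with is_sp_ind' := Induction for is_sp Sort Prop.
Combined Scheme is_G_H_R_sp_ind from is_G_ind', is_H_ind', is_R_ind', is_sp_ind'.

Definition is_lam_app (t : term) : Prop :=
  match t with App (Lam _) _ => True | _ => False end.

Definition is_redex (t : term) : Prop :=
  match t with
  | App (Lam _) (Var _ | Lam _) => True
  | App (App (Lam _) _) _ => True
  | App (Var _ | Lam _) (App (Lam _) _) => True
  | _ => False
  end.

Lemma v_normal_Var n : v_normal (Var n).
Proof. intros [N HN]; inversion HN. Qed.

Lemma v_normal_Lam M : v_normal (Lam M) <-> v_normal M.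
Proof.
  split; intros HM [N HN].
  - apply HM; exists (Lam N); constructor; exact HN.
  - inversion HN; subst; apply HM; eauto.
Qed.

Lemma is_redex_step M N : is_redex (App M N) -> exists P, step (App M N) P.
Proof.
  destruct M as [|M|[|M|] Q], N as [|N|[|N|] R]; simpl; try contradiction;
    intros _; eexists;
    solve [apply step_betav; exact I | apply step_sigma1 | apply step_sigma3; exact I].
Qed.

Lemma v_normal_App M N :
  v_normal (App M N) <-> v_normal M /\ v_normal N /\ ~ is_redex (App M N).
Proof.
  split.
  - intros HMN; repeat split.
    + intros [M' HM]; apply HMN; exists (App M' N); now constructor.
    + intros [N' HN]; apply HMN; exists (App M N'); now constructor.
    + intros Hr; exact (HMN (is_redex_step M N Hr)).
  - intros (HM & HN & Hr) [P HP]; inversion HP; subst; simpl in Hr.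
    + destruct N; simpl in *; tauto.
    + exact (Hr I).
    + destruct M; simpl in *; tauto.
    + apply HM; eauto.
    + apply HN; eauto.
Qed.

Lemma grammar_v_normal :
  (forall t, is_G t -> v_normal t) /\
  (forall t, is_H t -> v_normal t /\ ~ is_lam_app t) /\
  (forall t, is_R t -> v_normal t) /\
  (forall t, is_sp t -> v_normal t /\ ~ is_value t /\ ~ is_lam_app t).
Proof.
  apply (is_G_H_R_sp_ind
    (fun t _ => v_normal t) (fun t _ => v_normal t /\ ~ is_lam_app t)
    (fun t _ => v_normal t) (fun t _ => v_normal t /\ ~ is_value t /\ ~ is_lam_app t)).
  - intros t _ [Ht _]; exact Ht.
  - intros t _ Ht; exact Ht.
  - split; [apply v_normal_Var | auto].
  - intros g _ Hg; split; [apply v_normal_Lam, Hg | auto].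
  - intros t _ (Ht & _ & Hl); auto.
  - intros g t _ Hg _ (Ht & Hv & Hl).
    apply v_normal_App; split; [apply v_normal_Lam, Hg | split; [exact Ht|]].
    destruct t as [| |[]]; simpl in *; tauto.
  - intros n h _ [Hh Hl]; split; [|simpl; tauto].
    apply v_normal_App; split; [apply v_normal_Var | split; [exact Hh|]].
    destruct h as [| |[]]; simpl in *; tauto.
  - intros t g _ (Ht & Hv & Hl) _ Hg; split; [|destruct t; simpl in *; tauto].
    apply v_normal_App; split; [exact Ht | split; [exact Hg|]].
    destruct t as [| |[]]; simpl in *; tauto.
Qed.

Lemma is_G_Lam_inv g : is_G (Lam g) -> is_G g.
Proof.
  intros HG; inversion HG as [t HH|t HR]; subst.
  - inversion HH as [|g' Hg|t Hsp]; subst; [exact Hg | inversion Hsp].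
  - inversion HR.
Qed.

Lemma is_G_is_H t : is_G t -> ~ is_lam_app t -> is_H t.
Proof.
  intros [t' HH|t' HR] Hl; [exact HH|].
  destruct HR; simpl in Hl; tauto.
Qed.

Lemma is_H_App_sp M N : is_H (App M N) -> is_sp (App M N).
Proof. intros HH; inversion HH; assumption. Qed.

Lemma is_G_App M N :
  is_G M -> is_G N -> ~ is_redex (App M N) -> is_G (App M N).
Proof.
  intros HM HN Hr.
  destruct M as [n|g|P Q].
  - apply G_H, H_sp, sp_base, is_G_is_H; [exact HN|].
    destruct N as [| |[]]; simpl in *; tauto.
  - destruct N as [|N|P Q]; simpl in Hr; try tauto.
    apply G_R, R_intro; [apply is_G_Lam_inv, HM|].
    apply is_H_App_sp, is_G_is_H; [exact HN|].
    destruct P; simpl in *; tauto.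
  - apply G_H, H_sp, sp_app; [|exact HN].
    apply is_H_App_sp, is_G_is_H; [exact HM|].
    destruct P; simpl in *; tauto.
Qed.

Lemma v_normal_is_G M : v_normal M -> is_G M.
Proof.
  induction M as [n|M IH|M IHM N IHN]; intros HM.
  - apply G_H, H_var.
  - apply G_H, H_lam, IH, v_normal_Lam, HM.
  - apply v_normal_App in HM as (HM & HN & Hr).
    apply is_G_App; auto.
Qed.

Theorem lemma1p7 : forall M : term, v_normal M <-> is_G M.
Proof.
  intros M; split.
  - apply v_normal_is_G.
  - apply grammar_v_normal.
Qed.
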